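(* Let $\theta_1,\theta_2\in\mathbb{R}$ satisfy $\sin(\theta_1)\sin(\theta_2)>0$. Then the two-player two-strategy game with payoffs \[ G_1=\begin{bmatrix}\frac{1}{\sqrt2}\sin(\theta_1+\frac{\pi}{4})&\frac{1}{\sqrt2}\cos(\theta_1+\frac{\pi}{4})\\ -\frac{1}{\sqrt2}\sin(\theta_1+\frac{\pi}{4})&-\frac{1}{\sqrt2}\cos(\theta_1+\frac{\pi}{4})\end{bmatrix},\qquad G_2=\begin{bmatrix}\frac{1}{\sqrt2}\sin(\theta_2+\frac{\pi}{4})&-\frac{1}{\sqrt2}\sin(\theta_2+\frac{\pi}{4})\\ \frac{1}{\sqrt2}\cos(\theta_2+\frac{\pi}{4})&-\frac{1}{\sqrt2}\cos(\theta_2+\frac{\pi}{4})\end{bmatrix} \] (rows indexed by player 1's strategy $a_1\in\{A,B\}$, columns by player 2's strategy $a_2\in\{A,B\}$) is invariant-common-payoff.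
   Context: A two-player game $(G_1,G_2)$ is invariant-common-payoff if there exist scalars $s_1,s_2>0$ and functions $b_1$ (of $a_2$) and $b_2$ (of $a_1$) such that $\hat G_1(a)=s_1G_1(a)+b_1(a_2)$ and $\hat G_2(a)=s_2G_2(a)+b_2(a_1)$ satisfy $\hat G_1(a)=\hat G_2(a)$ for all joint strategies $a=(a_1,a_2)$. *)

From Stdlib Require Import Reals.
Open Scope R_scope.

Inductive strat : Type := SA | SB.

Definition payoff := strat -> strat -> R.

Definition invariant_common_payoff (G1 G2 : payoff) : Prop :=
  exists (s1 s2 : R) (b1 b2 : strat -> R),
    0 < s1 /\ 0 < s2 /\
    forall a1 a2 : strat,
      s1 * G1 a1 a2 + b1 a2 = s2 * G2 a1 a2 + b2 a1.

Definition G1_of (t1 : R) : payoff := fun a1 a2 =>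
  match a1, a2 with
  | SA, SA => / sqrt 2 * sin (t1 + PI / 4)
  | SA, SB => / sqrt 2 * cos (t1 + PI / 4)
  | SB, SA => - (/ sqrt 2 * sin (t1 + PI / 4))
  | SB, SB => - (/ sqrt 2 * cos (t1 + PI / 4))
  end.

Definition G2_of (t2 : R) : payoff := fun a1 a2 =>
  match a1, a2 with
  | SA, SA => / sqrt 2 * sin (t2 + PI / 4)
  | SA, SB => - (/ sqrt 2 * sin (t2 + PI / 4))
  | SB, SA => / sqrt 2 * cos (t2 + PI / 4)
  | SB, SB => - (/ sqrt 2 * cos (t2 + PI / 4))
  end.

(* A 2x2 payoff H splits as H a1 a2 = b2 a1 - b1 a2 exactly when its
   interaction term H(A,A) - H(A,B) - H(B,A) + H(B,B) vanishes, so a game is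
   invariant-common-payoff as soon as s1 * interaction G1 = s2 * interaction G2
   for some s1, s2 > 0.  Here interaction (G_i) = 2 sin(theta_i), and positive
   scalings s1 = sin(theta_2)^2, s2 = sin(theta_1) sin(theta_2) exist because
   sin(theta_1) and sin(theta_2) have the same sign. *)

From Stdlib Require Import Reals Lra.
Open Scope R_scope.

Definition interaction (H : payoff) : R :=
  H SA SA - H SA SB - H SB SA + H SB SB.

Lemma separable_of_interaction0 (H : payoff) :
  interaction H = 0 ->
  exists b1 b2 : strat -> R, forall a1 a2, H a1 a2 = b2 a1 - b1 a2.
Proof.
  unfold interaction; intros Hint.
  exists (fun a2 => H SA SA - H SA a2), (fun a1 => H a1 SA).
  intros [|] [|]; lra.
Qed.

Lemma invariant_common_payoff_of_interaction (G1 G2 : payoff) (s1 s2 : R) :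
  0 < s1 -> 0 < s2 -> s1 * interaction G1 = s2 * interaction G2 ->
  invariant_common_payoff G1 G2.
Proof.
  intros Hs1 Hs2 Hint.
  set (H := fun a1 a2 => s1 * G1 a1 a2 - s2 * G2 a1 a2).
  assert (HH0 : interaction H = 0) by (unfold interaction, H in *; lra).
  destruct (separable_of_interaction0 H HH0) as [b1 [b2 Hb]].
  exists s1, s2, b1, b2; split; [exact Hs1 | split; [exact Hs2 |]].
  intros a1 a2; specialize (Hb a1 a2); unfold H in Hb; lra.
Qed.

Lemma sin_sub_cos_add_PI4 (t : R) :
  / sqrt 2 * (sin (t + PI / 4) - cos (t + PI / 4)) = sin t.
Proof.
  rewrite sin_plus, cos_plus, sin_PI4, cos_PI4.
  assert (H2 : sqrt 2 * sqrt 2 = 2) by (apply sqrt_sqrt; lra).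
  assert (Hn : sqrt 2 <> 0) by (intro E; rewrite E in H2; lra).
  replace (/ sqrt 2 * (sin t * (1 / sqrt 2) + cos t * (1 / sqrt 2)
                       - (cos t * (1 / sqrt 2) - sin t * (1 / sqrt 2))))
    with (2 * sin t / (sqrt 2 * sqrt 2)) by (field; exact Hn).
  rewrite H2; field.
Qed.

Lemma interaction_G1_of (t : R) : interaction (G1_of t) = 2 * sin t.
Proof.
  rewrite <- (sin_sub_cos_add_PI4 t); unfold interaction, G1_of; ring.
Qed.

Lemma interaction_G2_of (t : R) : interaction (G2_of t) = 2 * sin t.
Proof.
  rewrite <- (sin_sub_cos_add_PI4 t); unfold interaction, G2_of; ring.
Qed.

Theorem mainTheorem4 (t1 t2 : R) (h : 0 < sin t1 * sin t2) :
  invariant_common_payoff (G1_of t1) (G2_of t2).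
Proof.
  assert (Hsin2 : sin t2 <> 0) by (intro E; rewrite E in h; lra).
  apply (invariant_common_payoff_of_interaction _ _
           (sin t2 * sin t2) (sin t1 * sin t2)).
  - apply Rsqr_pos_lt; exact Hsin2.
  - exact h.
  - rewrite interaction_G1_of, interaction_G2_of; ring.
Qed.
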